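(* Fix a prime $p$ and $n\in\mathbb{N}$, and let $\mathbb{L}_{p,n}$ denote the restriction of $\mathbb{L}_p(r)=|r|+\|r\|_p$ to the subgroup $\frac{1}{p^n}\mathbb{Z}$ of $\mathbb{Z}[\tfrac1p]$. Then $\frac1{p^n}\mathbb{Z}$ has the property of bounded $p$-dilation with respect to $\mathbb{L}_{p,n}$. In particular, $\mathbb{L}_{p,n}$ is of bounded doubling with constant $C_{\mathbb{L}_{p,n}}=4p^8$.
   Context: $\mathbb{Z}[\tfrac1p]=\{a/p^k:a\in\mathbb{Z},k\in\mathbb{N}\}$; $\|\cdot\|_p$ is the $p$-adic norm ($\|0\|_p=0$, $\|r\|_p=p^{-n}$ if $r=ap^n/b$ with $a,b$ coprime to $p$ and to each other). For a length function $\mathbb{L}$ on a discrete group $\Gamma$ (i.e. $\mathbb{L}(\gamma)=0\iff\gamma=e$, symmetric, subadditive), $B_{\mathbb{L}}(R)=\{\gamma:\mathbb{L}(\gamma)\le R\}$; $\mathbb{L}$ is proper if all $B_{\mathbb{L}}(R)$ are finite; $\Gamma$ has bounded $\mathbf t$-dilation w.r.t. $\mathbb{L}$ ($\mathbf t>1$) if $\mathbb{L}$ is proper and $|B_{\mathbb{L}}(\mathbf tR)|\le K|B_{\mathbb{L}}(R)|$ for some $K<\infty$ and all $R\ge1$; $\mathbb{L}$ is of bounded doubling with constant $C$ if it is proper and $|B_{\mathbb{L}}(2R)|\le C|B_{\mathbb{L}}(R)|$ for all $R\ge1$. *)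

From HB Require Import structures.
From mathcomp Require Import all_boot all_order all_algebra.
From mathcomp Require Import all_classical all_reals.
From mathcomp Require Import finmap.
Set Implicit Arguments. Unset Strict Implicit. Unset Printing Implicit Defensive.
Import Order.TTheory GRing.Theory Num.Theory.
Local Open Scope ring_scope.
Local Open Scope classical_set_scope.
Local Open Scope fset_scope.

(* p-adic norm on rationals: ||0||_p = 0, ||a p^k / b||_p = p^(-k)
   (a, b coprime to p). For r = numq r / denq r in lowest terms,
   k = v_p(numq r) - v_p(denq r). *)
Definition padic_norm (p : nat) (r : rat) : rat :=
  if r == 0 then 0
  else (p%:R ^+ logn p (absz (denq r))) / (p%:R ^+ logn p (absz (numq r))).

Definition Lp (p : nat) (r : rat) : rat := `|r| + padic_norm p r.

Definition in_pnZ (p n : nat) (r : rat) : bool := (r * (p ^ n)%:R) \is a Num.int.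
Definition pnZ (p n : nat) := {r : rat | in_pnZ p n r}.

Definition Lpn (R : realType) (p n : nat) (g : pnZ p n) : R := ratr (Lp p (val g)).

Definition ball_L {T} {R : realType} (L : T -> R) (r : R) : set T := [set g | L g <= r].
Definition proper_L {T} {R : realType} (L : T -> R) : Prop :=
  forall r : R, finite_set (ball_L L r).
Definition ball_card {T : choiceType} {R : realType} (L : T -> R) (r : R) : nat :=
  #|` fset_set (ball_L L r)|%fset.

Definition bounded_dilation {T : choiceType} {R : realType} (t : R) (L : T -> R) : Prop :=
  proper_L L /\ exists K : R, forall r : R, 1 <= r ->
    (ball_card L (t * r))%:R <= K * (ball_card L r)%:R.

Definition bounded_doubling {T : choiceType} {R : realType} (C : R) (L : T -> R) : Prop :=
  proper_L L /\ forall r : R, 1 <= r ->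
    (ball_card L (2 * r))%:R <= C * (ball_card L r)%:R.

From mathcomp Require Import all_boot all_order all_algebra.
From mathcomp Require Import all_classical all_reals finmap.
From mathcomp Require Import zify ring lra.
Import Order.TTheory GRing.Theory Num.Theory.
Local Open Scope ring_scope.

(* Write the elements of (1/p^n)Z as a/p^n, so that L(a/p^n) = |a|/p^n + p^(n - v_p(a)).
   Given S >= 1 pick m with p^m <= S/2 < p^(m+1) (m = 0 if S < 2) and divide:
   p^2 a = q p^(m+n) + w with 0 <= w < p^(m+n).  If L(a/p^n) <= p S, then
   |w|/p^n < p^m <= S/2, and either w = 0 or p^(v_p(a)+2) divides w, whence
   p^(n - v_p(w)) <= S/p; so L(w/p^n) <= S.  Moreover |q| <= 2p^4, and the pair
   (w, q) determines a, so the ball of radius p S has at most 4p^4 + 1 times as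
   many points as the ball of radius S.  Doubling follows from 2 <= p. *)

Lemma card_imfset2_le (T1 T2 K : choiceType) (f : T1 -> T2 -> K)
    (A : {fset T1}) (B : {fset T2}) :
  (#|` [fset f x y | x in A, y in B]%fset| <= #|` A| * #|` B|)%N.
Proof.
rewrite Imfset.imfset2E /= size_seq_fset.
by apply: leq_trans (size_undup _) _; rewrite size_allpairs.
Qed.

Section BallCounting.
Variables (R : realType) (T : choiceType) (L : T -> R).
Hypothesis L_proper : proper_L L.

Lemma ball_card_le r s : r <= s -> (ball_card L r <= ball_card L s)%N.
Proof.
move=> le_rs; apply: fsubset_leq_card; rewrite -fset_set_sub //.
by move=> g /= /le_trans; apply.
Qed.

Lemma ball_card_le_mul (I : choiceType) (f : T -> I -> T) (F : {fset I}) r s :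
    (forall g, L g <= r -> exists2 h, L h <= s & exists2 q, q \in F & g = f h q) ->
  (ball_card L r <= ball_card L s * #|` F|)%N.
Proof.
move=> cover; rewrite /ball_card.
apply: (@leq_trans #|` [fset f h q | h in fset_set (ball_L L s), q in F]%fset|).
  2: exact: card_imfset2_le.
apply: fsubset_leq_card; apply/fsubsetP => g.
rewrite in_fset_set ?in_setE // => /cover [h Lh [q qF ->]].
by apply/imfset2P; exists h; rewrite ?in_fset_set ?in_setE //; exists q.
Qed.

End BallCounting.

Definition int_range (K : nat) : {fset int} :=
  [fset (i%:Z - K%:Z)%R | i : 'I_(2 * K).+1 in 'I_(2 * K).+1]%fset.

Lemma card_int_range_le K : (#|` int_range K| <= (2 * K).+1)%N.
Proof. by apply: leq_trans (leq_imfset_card _ _ _) _; rewrite size_enum_ord. Qed.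

Lemma mem_int_range K (q : int) : `|q| <= K%:Z -> q \in int_range K.
Proof.
rewrite ler_norml => q_bd; apply/imfsetP.
have lt_qK : (`|(q + K%:Z)%R|%N < (2 * K).+1)%N by lia.
by exists (Ordinal lt_qK) => //=; lia.
Qed.

Lemma abs_divz_le (b d K : int) : 0 < d -> `|b| < K * d -> `|(b %/ d)%Z| <= K.
Proof.
rewrite ltr_norml => d_gt0 /andP[lt_Kb lt_bK].
by rewrite ler_norml lez_divRL // mulNr (ltW lt_Kb) ltW ?ltz_divLR.
Qed.

Lemma logn_modz_ge (p k : nat) (b d : int) : prime p ->
    ((p ^ k)%:Z %| b)%Z -> ((p ^ k)%:Z %| d)%Z -> (b %% d)%Z != 0 ->
  (k <= logn p `|(b %% d)%Z|)%N.
Proof.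
move=> p_prime dvd_b dvd_d w_neq0.
rewrite -pfactor_dvdn ?absz_gt0 // -(absz_nat (p ^ k)) -dvdzE.
have -> : (b %% d)%Z = b - (b %/ d)%Z * d by rewrite {2}(divz_eq b d) addrAC subrr add0r.
exact: rpredB dvd_b (dvdz_mull _ dvd_d).
Qed.

Lemma logn_pmodz (p k v : nat) (a : int) : prime p ->
    (((p ^ k)%:Z * a) %% (p ^ v)%:Z)%Z != 0 ->
  (logn p `|a| + k < v)%N /\
  (logn p `|a| + k <= logn p `|(((p ^ k)%:Z * a) %% (p ^ v)%:Z)%Z|)%N.
Proof.
move=> p_prime w_neq0; set b := ((p ^ k)%:Z * a).
have dvd_b : ((p ^ (logn p `|a| + k))%:Z %| b)%Z.
  by rewrite dvdzE !absz_nat abszM absz_nat expnD mulnC dvdn_mul ?pfactor_dvdnn.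
have lt_v : (logn p `|a| + k < v)%N.
  rewrite ltnNge; apply: contra w_neq0 => le_v.
  by apply/eqP/dvdz_mod0P/(dvdz_trans _ dvd_b); rewrite dvdzE !absz_nat dvdn_exp2l.
split=> //; apply: logn_modz_ge => //.
by rewrite dvdzE !absz_nat (dvdn_exp2l _ (ltnW lt_v)).
Qed.

Lemma expr_bracket (R : realType) (p : nat) (x : R) : (1 < p)%N ->
  exists m : nat, x < p%:R ^+ m.+1 /\ (p%:R ^+ m <= x \/ x < 1 /\ m = 0%N).
Proof.
move=> p_gt1; set t := Num.truncn x; exists (trunc_log p t); split.
  apply: lt_le_trans (truncnS_gt x) _.
  by rewrite -natrX ler_nat trunc_log_ltn.
have [x_lt1|x_ge1] := ltP x 1.
  by right; split=> //; rewrite /t (truncn0Pn _ _) ?trunc_log0 // -ltNge.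
left; apply: le_trans (_ : t%:R <= x); last by rewrite truncn_le (le_trans ler01).
by rewrite -natrX ler_nat trunc_logP // truncn_gt0.
Qed.

Lemma in_pnZ_int (p n : nat) (a : int) : in_pnZ p n (a%:~R / (p ^ n)%:R).
Proof.
rewrite /in_pnZ; have [->|pn_neq0] := eqVneq ((p ^ n)%:R : rat) 0.
  by rewrite mulr0 rpred0.
by rewrite divfK // intr_int.
Qed.

Definition pnZ_of_int (p n : nat) (a : int) : pnZ p n :=
  exist _ (a%:~R / (p ^ n)%:R) (in_pnZ_int p n a).

Definition pnZ_num {p n : nat} (g : pnZ p n) : int := numq (val g * (p ^ n)%:R).

Section Coordinates.
Variables (p n : nat).
Hypothesis p_gt0 : (0 < p)%N.

Let pn_neq0 : ((p ^ n)%:R : rat) != 0.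
Proof. by rewrite pnatr_eq0 expn_eq0 negb_and -lt0n p_gt0. Qed.

Lemma pnZ_of_intK : cancel (pnZ_of_int p n) (@pnZ_num p n).
Proof. by move=> a; rewrite /pnZ_num /= divfK // numq_int. Qed.

Lemma pnZ_numK : cancel (@pnZ_num p n) (pnZ_of_int p n).
Proof. by move=> [r r_pnZ]; apply: val_inj; rewrite /= numqK // mulfK. Qed.

End Coordinates.

Lemma padic_norm_frac (p : nat) (x : int) (y : nat) : prime p -> x != 0 -> (0 < y)%N ->
  padic_norm p (x%:~R / y%:R) = p%:R ^+ logn p y / p%:R ^+ logn p `|x|.
Proof.
move=> p_prime x_neq0 y_gt0.
have p_neq0 : (p%:R : rat) != 0 by rewrite pnatr_eq0 -lt0n prime_gt0.
have y_neq0 : (y%:R : rat) != 0 by rewrite pnatr_eq0 -lt0n.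
set r := x%:~R / y%:R.
have r_neq0 : r != 0 by rewrite mulf_neq0 ?invr_eq0 // intr_eq0.
rewrite /padic_norm (negbTE r_neq0).
have cross : numq r * y%:Z = x * denq r.
  apply: (@intr_inj rat); rewrite !intrM.
  have den_neq0 : ((denq r)%:~R : rat) != 0 by rewrite intr_eq0 denq_neq0.
  have /eqP := divq_num_den r; rewrite {2}/r eqr_div // => /eqP ->.
  by rewrite mulrC.
have logn_cross : (logn p `|numq r| + logn p y = logn p `|x| + logn p `|denq r|)%N.
  rewrite -!lognM ?absz_gt0 ?numq_eq0 ?denq_neq0 //.
  by have := congr1 absz cross; rewrite !abszM absz_nat => ->.
apply/eqP; rewrite eqr_div ?expf_neq0 // -!exprD; apply/eqP; congr (_ ^+ _).
by rewrite addnC -logn_cross addnC.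
Qed.

Definition Lcoord (R : realType) (p n : nat) (a : int) : R :=
  `|a|%:~R / p%:R ^+ n + (if a == 0 then 0 else p%:R ^+ n / p%:R ^+ logn p `|a|).

Section LengthInCoordinates.
Variables (R : realType) (p n : nat).
Hypothesis p_prime : prime p.
Local Notation P := (p%:R : R).

Let P_gt0 : 0 < P. Proof. by rewrite ltr0n prime_gt0. Qed.

Lemma Lpn_of_int (a : int) : Lpn R (pnZ_of_int p n a) = Lcoord R p n a.
Proof.
rewrite /Lpn /Lp /Lcoord /=; have [->|a_neq0] := eqVneq a 0.
  by rewrite /padic_norm mul0r eqxx rmorph0 !normr0 mul0r !addr0.
rewrite padic_norm_frac ?expn_gt0 ?prime_gt0 // pfactorK //.
rewrite rmorphD /= ratr_norm !fmorph_div /= ratr_int !rmorphXn /= !ratr_nat.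
by rewrite normf_div normrX normr_nat intr_norm.
Qed.

Lemma Lcoord_abs_le (a : int) : `|a|%:~R / P ^+ n <= Lcoord R p n a.
Proof.
rewrite /Lcoord lerDl; case: ifP => // _.
by rewrite divr_ge0 ?exprn_ge0 ?ler0n.
Qed.

Lemma Lcoord_padic_le (a : int) : a != 0 -> P ^+ n / P ^+ logn p `|a| <= Lcoord R p n a.
Proof.
move=> a_neq0; rewrite /Lcoord (negbTE a_neq0) lerDr.
by rewrite divr_ge0 ?exprn_ge0 ?ler0n.
Qed.

Lemma Lpn_proper : proper_L (@Lpn R p n).
Proof.
move=> r; set N := Num.truncn (r * P ^+ n).
apply: (finite_subfset [fset pnZ_of_int p n q | q in int_range N]%fset) => g /=.
have [a ->] : exists a, g = pnZ_of_int p n a by exists (pnZ_num g); rewrite pnZ_numK ?prime_gt0.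
rewrite /ball_L /= Lpn_of_int => La_le; apply/imfsetP; exists a => //; apply: mem_int_range.
have abs_le : `|a|%:~R <= r * P ^+ n.
  by rewrite -ler_pdivrMr ?exprn_gt0 //; apply: le_trans (Lcoord_abs_le a) La_le.
by rewrite -abszE lez_nat truncn_ge_nat ?natr_absz ?(le_trans _ abs_le).
Qed.

Lemma Lcoord_modz_le (S : R) (m : nat) (a : int) : 0 <= S ->
    P ^+ m <= S / 2 \/ S / 2 < 1 /\ m = 0%N -> Lcoord R p n a <= P * S ->
  Lcoord R p n (((p ^ 2)%:Z * a) %% (p ^ (m + n))%:Z)%Z <= S.
Proof.
move=> S_ge0 hm La_le; have P_ge2 : 2 <= P by rewrite ler_nat prime_gt1.
have P_gt1 : 1 < P by rewrite ltr1n prime_gt1.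
set b := ((p ^ 2)%:Z * a); set d := (p ^ (m + n))%:Z.
have [/dvdz_mod0P ->|ndvd_db] := boolP (d %| b)%Z.
  by rewrite /Lcoord eqxx normr0 mul0r addr0.
have d_gt0 : 0 < d by rewrite ltz_nat expn_gt0 prime_gt0.
have w_ge0 : 0 <= (b %% d)%Z by rewrite modz_ge0 ?gt_eqF.
have w_lt_d : (b %% d)%Z < d by rewrite ltz_pmod.
have w_neq0 : (b %% d)%Z != 0 by apply: contra ndvd_db => /eqP/dvdz_mod0P.
have [lt_v_mn le_v_w] := logn_pmodz _ _ _ _ p_prime w_neq0.
set w := (b %% d)%Z in w_ge0 w_lt_d w_neq0 le_v_w *.
have a_neq0 : a != 0 by apply: contra w_neq0 => /eqP a0; rewrite /w /b a0 mulr0 mod0z.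
set v := logn p `|a| in lt_v_mn le_v_w *.
have padic_w : P ^+ n / P ^+ logn p `|w| <= S / P.
  apply: (@le_trans _ _ (P ^+ n / P ^+ (v + 2))).
    by rewrite ler_pM2l ?exprn_gt0 // lef_pV2 ?posrE ?exprn_gt0 // (ler_eXn2l P_gt1).
  have -> : S / P = P * S / P ^+ 2 by field; rewrite gt_eqF.
  rewrite exprD invfM mulrA ler_pM2r ?invr_gt0 ?exprn_gt0 //.
  exact: le_trans (Lcoord_padic_le _ a_neq0) La_le.
rewrite /Lcoord (negbTE w_neq0).
case: hm => [Pm_le | [S_lt2 m0]]; last first.
  (* For S < 2 the remainder vanishes: v + 2 < n would force p^2 <= L(a) <= p S < 2 p. *)
  have : P ^+ n / P ^+ v < P ^+ 2.
    apply: le_lt_trans (le_trans (Lcoord_padic_le _ a_neq0) La_le) _.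
    by rewrite expr2 ltr_pM2l //; lra.
  rewrite ltr_pdivrMr ?exprn_gt0 // -exprD (ltr_eXn2l P_gt1).
  by move: lt_v_mn; rewrite m0; lia.
have abs_w : `|w|%:~R / P ^+ n < P ^+ m.
  by rewrite ltr_pdivrMr ?exprn_gt0 // -exprD -natrX ger0_norm // pmulrn ltr_int.
have S_div : S / P <= S / 2 by rewrite ler_wpM2l // lef_pV2 ?posrE.
lra.
Qed.

Lemma Lcoord_divz_le (S : R) (m : nat) (a : int) :
    S / 2 < P ^+ m.+1 -> Lcoord R p n a <= P * S ->
  `|(((p ^ 2)%:Z * a) %/ (p ^ (m + n))%:Z)%Z| <= (2 * p ^ 4)%:Z.
Proof.
move=> S_lt La_le; apply: abs_divz_le; first by rewrite ltz_nat expn_gt0 prime_gt0.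
rewrite -(ltr_int R) normrM !intrM (@ger0_norm _ (p ^ 2)%:Z) // -!pmulrn !natrM !natrX.
have abs_a : `|a|%:~R <= P * S * P ^+ n.
  by rewrite -ler_pdivrMr ?exprn_gt0 //; apply: le_trans (Lcoord_abs_le a) La_le.
have S_lt2 : S < 2 * (P * P ^+ m) by rewrite -exprS; lra.
apply: le_lt_trans (ler_wpM2l (exprn_ge0 2 (ltW P_gt0)) abs_a) _.
have -> : P ^+ 2 * (P * S * P ^+ n) = P ^+ 3 * P ^+ n * S by ring.
have -> : 2%:R * P ^+ 4 * P ^+ (m + n) = P ^+ 3 * P ^+ n * (2 * (P * P ^+ m)).
  by rewrite exprD; ring.
by rewrite ltr_pM2l ?mulr_gt0 ?exprn_gt0.
Qed.

Lemma ball_card_Lpn_dilate (S : R) : 1 <= S ->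
  (ball_card (@Lpn R p n) (P * S) <= ball_card (@Lpn R p n) S * (4 * p ^ 4).+1)%N.
Proof.
move=> S_ge1; have [m [S_lt hm]] := @expr_bracket R p (S / 2) (prime_gt1 p_prime).
pose d := (p ^ (m + n))%:Z.
pose f (h : pnZ p n) (q : int) := pnZ_of_int p n ((pnZ_num h + q * d) %/ (p ^ 2)%:Z)%Z.
apply: (@leq_trans (ball_card (@Lpn R p n) S * #|` int_range (2 * p ^ 4)|)); last first.
  by rewrite leq_mul2l (leq_trans (card_int_range_le _)) ?orbT // mulnA.
apply: (@ball_card_le_mul R _ (@Lpn R p n) Lpn_proper _ f).
  move=> g; have [a ->] : exists a, g = pnZ_of_int p n a.
    by exists (pnZ_num g); rewrite pnZ_numK ?prime_gt0.
  rewrite Lpn_of_int => La_le.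
  exists (pnZ_of_int p n (((p ^ 2)%:Z * a) %% d)%Z).
    by rewrite Lpn_of_int Lcoord_modz_le ?(le_trans ler01).
  exists (((p ^ 2)%:Z * a) %/ d)%Z.
    exact/mem_int_range/(Lcoord_divz_le _ _ _ S_lt La_le).
  rewrite /f pnZ_of_intK ?prime_gt0 // addrC -divz_eq mulKz //.
  by rewrite eqz_nat expn_eq0 negb_and -lt0n prime_gt0.
Qed.

End LengthInCoordinates.

Theorem lemma3p16 (R : realType) (p n : nat) (hp : prime p) :
  bounded_dilation (p%:R : R) (@Lpn R p n) /\
  bounded_doubling (4 * (p%:R : R) ^+ 8) (@Lpn R p n).
Proof.
have L_proper := @Lpn_proper R p n hp.
have dilate r : 1 <= r -> (ball_card (@Lpn R p n) (p%:R * r))%:R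
    <= 4 * (p%:R : R) ^+ 8 * (ball_card (@Lpn R p n) r)%:R.
  move=> r_ge1; have const_le : ((4 * p ^ 4).+1 <= 4 * p ^ 8)%N.
    have : (2 ^ 4 <= p ^ 4)%N by rewrite leq_exp2r ?prime_gt1.
    by rewrite (_ : 8 = 4 + 4)%N // expnD; move: (p ^ 4)%N => t; nia.
  rewrite -natrX -[4]/(4%:R) -!natrM ler_nat mulnC.
  exact: leq_trans (@ball_card_Lpn_dilate R p n hp r r_ge1) (leq_mul (leqnn _) const_le).
split; first by split=> //; exists (4 * (p%:R : R) ^+ 8).
split=> // r r_ge1; apply: le_trans (dilate r r_ge1).
by rewrite ler_nat ball_card_le // ler_pM2r ?ler_nat ?prime_gt1 // (lt_le_trans ltr01).
Qed.
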